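(* In the standing setting of the context, for all $r,t>0$ and all $x\in M$, $$\mathbb{P}^x\big(d(X_t,x)\le r\big)\asymp1\wedge\frac{V(r)}{V(\phi^{-1}(t))},$$ with comparison constants independent of $x,r,t$.
   Context: Standing setting: $(M,d)$ is a locally compact separable metric space, $\mu$ a positive Radon measure on $M$ with full support, $(\mathcal{E},\mathcal{F})$ a regular Dirichlet form on $L^2(M;\mu)$ (no killing part), and $X=(\{X_t\},\{\mathbb P^x\})$ the associated $\mu$-symmetric Hunt process. $V,\phi$ are increasing functions on $(0,\infty)$, $\phi^{-1}$ the inverse of $\phi$, with constants $c_i,d_i>0$ ($i=1,\dots,4$) such that $c_1(R/r)^{d_1}\le V(R)/V(r)\le c_2(R/r)^{d_2}$ and $c_3(R/r)^{d_3}\le\phi(R)/\phi(r)\le c_4(R/r)^{d_4}$ for all $0<r<R<\infty$. $X$ has a symmetric heat kernel $p(t,x,y)$ defined for all $x,y\in M$, $t>0$, with $p(t,x,y)\asymp\frac{1}{V(\phi^{-1}(t))}\wedge\frac{t}{V(d(x,y))\phi(d(x,y))}$ for all $x,y,t$. $f\asymp g$ means $c^{-1}f\le g\le cf$ with $c\ge1$ independent of the variables. *)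

From HB Require Import structures.
From mathcomp Require Import all_boot all_order all_algebra.
From mathcomp Require Import all_classical all_reals all_analysis.
Set Implicit Arguments. Unset Strict Implicit. Unset Printing Implicit Defensive.
Import Order.TTheory GRing.Theory Num.Theory.
Import numFieldNormedType.Exports.
Local Open Scope classical_set_scope.
Local Open Scope ring_scope.

Section MetricDefs.
Variables (R : realType) (M : Type) (d : M -> M -> R).

Definition is_metric : Prop :=
  [/\ forall x y, 0 <= d x y,
      forall x y, d x y = 0 <-> x = y,
      forall x y, d x y = d y x &
      forall x y z, d x z <= d x y + d y z].

Definition oball (x : M) (e : R) : set M := [set y | d x y < e].
Definition cball (x : M) (e : R) : set M := [set y | d x y <= e].

(* the family of open balls (generating the Borel sets of a separable metric space) *)
Definition open_balls : set (set M) :=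
  [set B | exists x e, B = oball x e].

Definition seq_compact (K : set M) : Prop :=
  forall u : nat -> M, (forall n, K (u n)) ->
    exists (s : nat -> nat) (l : M),
      (forall n, (s n < s n.+1)%N) /\ K l /\
      ((fun n => d (u (s n)) l) @ \oo --> (0 : R)).

Definition locally_compact_metric : Prop :=
  forall x, exists2 e : R, 0 < e & seq_compact (cball x e).

Definition separable_metric : Prop :=
  exists2 S : set M, countable S &
    forall x (e : R), 0 < e -> exists2 y, S y & d x y < e.
End MetricDefs.

(* the heat kernel profile  1/V(phi^{-1}(t)) /\ t/(V(r) phi(r)),
   where for r = 0 (i.e. x = y) the second term is +infinity *)
Definition hk_profile (R : realType) (V phi phiinv : R -> R) (t r : R) : R :=
  if r == 0 then (V (phiinv t))^-1
  else Num.min (V (phiinv t))^-1 (t / (V r * phi r)).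

(* Integrating the two-sided heat kernel bounds over a ball gives
     C^-1 mu(B(x, r /\ phi^-1(t))) / V(phi^-1(t)) <= P^x(X_t in B(x,r))
                                               <= C mu(B(x,r)) / V(phi^-1(t)),
   so it suffices that mu(B(x,r)) is comparable to V(r).  The upper volume bound
   is P^x(X_phi(r) in B(x,r)) <= 1.  For the lower one: off the diagonal the kernel
   grows at most linearly in t, so if A is so large that phi(r) >= 2 C^2 phi(r/A),
   the process started at x is still in B(x,r) at time phi(r/A) with probability
   at least 1/2; hence mu(B(x,r)) >= V(r/A) / (2C), and V(r/A) is comparable to
   V(r) by the scaling of V. *)

From HB Require Import structures.
From mathcomp Require Import all_boot all_order all_algebra.
From mathcomp Require Import all_classical all_reals all_analysis.
From mathcomp Require Import measurable_realfun.
From mathcomp.algebra_tactics Require Import ring lra.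
Import Order.TTheory GRing.Theory Num.Theory.
Import numFieldNormedType.Exports.
Local Open Scope classical_set_scope.
Local Open Scope ring_scope.

Section BoundedIntegrand.
Context {dT : measure_display} {T : measurableType dT} {R : realType}.
Variables (mu : {measure set T -> \bar R}) (A : set T) (f : T -> R).
Hypotheses (mA : measurable A) (mf : measurable_fun A f).
Hypothesis f_ge0 : forall y, A y -> 0 <= f y.

Lemma integral_le_cst_mul (c : R) : (forall y, A y -> f y <= c) ->
  (\int[mu]_(y in A) (f y)%:E <= c%:E * mu A)%E.
Proof.
move=> fc; rewrite -integral_cst //.
by apply: ge0_le_integral => //; exact/measurable_EFinP.
Qed.

Lemma cst_mul_le_integral (c : R) : 0 <= c -> (forall y, A y -> c <= f y) ->
  (c%:E * mu A <= \int[mu]_(y in A) (f y)%:E)%E.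
Proof.
move=> c0 fc; rewrite -integral_cst //.
by apply: ge0_le_integral => //; exact/measurable_EFinP.
Qed.

Lemma integral_le_scale (g : T -> R) (k : R) : measurable_fun A g -> 0 <= k ->
  (forall y, A y -> 0 <= g y) -> (forall y, A y -> f y <= k * g y) ->
  (\int[mu]_(y in A) (f y)%:E <= k%:E * \int[mu]_(y in A) (g y)%:E)%E.
Proof.
move=> mg k0 g0 fg; rewrite -ge0_integralZl_EFin //; last exact/measurable_EFinP.
apply: ge0_le_integral => //; first exact/measurable_EFinP.
by apply/measurable_EFinP; apply: measurable_funM => //; exact: measurable_cst.
Qed.

End BoundedIntegrand.

Lemma cball_measurable {R : realType} {dM : measure_display} {M : measurableType dM}
    {d : M -> M -> R} :
  (forall A : set M, measurable A <-> <<s open_balls d >> A) ->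
  forall x r, measurable (cball d x r).
Proof.
move=> hborel x r.
have -> : cball d x r = \bigcap_n oball d x (r + n.+1%:R^-1).
  apply/seteqP; split => y /=.
    by move=> hy n _; apply: (le_lt_trans hy); rewrite ltrDl invr_gt0 ltr0n.
  move=> hy; rewrite /cball /= leNgt; apply/negP => /ltr_add_invr[k hk].
  by have := hy k I; rewrite /oball /= => /(lt_trans hk); rewrite ltxx.
apply: bigcapT_measurable => n; apply/hborel; apply: sub_gen_smallest.
by exists x, (r + n.+1%:R^-1).
Qed.

Section HeatKernelEstimates.
Context {R : realType} {dM : measure_display} {M : measurableType dM}.
Context {d : M -> M -> R} {mu : {measure set M -> \bar R}}.
Context {V phi phiinv : R -> R} {c1 c2 c3 c4 d1 d2 d3 d4 : R}.
Context {dO : measure_display} {Omega : measurableType dO}.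
Context {P : M -> probability Omega R} {X : R -> Omega -> M} {p : R -> M -> M -> R}.
Hypotheses (hmetric : is_metric d)
  (hborel : forall A : set M, measurable A <-> <<s open_balls d >> A).
Hypotheses (hc : [/\ 0 < c1, 0 < c2, 0 < c3 & 0 < c4])
  (hd : [/\ 0 < d1, 0 < d2, 0 < d3 & 0 < d4]).
Hypotheses (hVpos : forall r, 0 < r -> 0 < V r)
  (hphipos : forall r, 0 < r -> 0 < phi r)
  (hVinc : forall r s, 0 < r -> r <= s -> V r <= V s)
  (hphiinc : forall r s, 0 < r -> r <= s -> phi r <= phi s)
  (hphiinv2 : forall t, 0 < t -> 0 < phiinv t /\ phi (phiinv t) = t).
Hypotheses (hVscale : forall r s, 0 < r -> r < s ->
     c1 * (s / r) `^ d1 <= V s / V r /\ V s / V r <= c2 * (s / r) `^ d2)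
  (hphiscale : forall r s, 0 < r -> r < s ->
     c3 * (s / r) `^ d3 <= phi s / phi r /\ phi s / phi r <= c4 * (s / r) `^ d4)
  (hphiinv1 : forall r, 0 < r -> phiinv (phi r) = r).
Local Notation profile := (hk_profile V phi phiinv).

Lemma hk_profile_le_diag t D : profile t D <= (V (phiinv t))^-1.
Proof. by rewrite /hk_profile; case: ifP => _ //; rewrite ge_min lexx. Qed.

Lemma hk_profile_near_diag t D : 0 < t -> 0 <= D -> D <= phiinv t ->
  profile t D = (V (phiinv t))^-1.
Proof.
move=> t0 D0 Dt; apply/le_anti; rewrite hk_profile_le_diag /=.
rewrite /hk_profile; case: ifP => // /negbT Dn0.
have Dp : 0 < D by rewrite lt_neqAle eq_sym Dn0 D0.
have [rp tphi] := hphiinv2 _ t0.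
have VDp := hVpos _ Dp; have phiDp := hphipos _ Dp; have Vrp := hVpos _ rp.
rewrite le_min lexx ler_pdivlMr ?mulr_gt0 //.
have -> : (V (phiinv t))^-1 * (V D * phi D) = V D / V (phiinv t) * phi D by ring.
rewrite -[leRHS]mul1r; apply: ler_pM.
- by rewrite divr_ge0 ?ltW.
- exact: ltW.
- by rewrite ler_pdivrMr // mul1r hVinc.
- by rewrite -[leRHS]tphi hphiinc.
Qed.

Lemma hk_profile_off_diag s D : 0 < s -> phiinv s <= D ->
  profile s D = s / (V D * phi D).
Proof.
move=> s0 sD; have [rp sphi] := hphiinv2 _ s0.
have Dp : 0 < D := lt_le_trans rp sD.
have VDp := hVpos _ Dp; have phiDp := hphipos _ Dp; have Vrp := hVpos _ rp.
rewrite /hk_profile (negbTE (lt0r_neq0 Dp)); apply/min_idPr.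
rewrite ler_pdivrMr ?mulr_gt0 // mulrC ler_pdivlMr // mulrC.
by apply: ler_pM; rewrite ?(ltW Vrp) ?(ltW s0) ?hVinc // -[leLHS]sphi hphiinc.
Qed.

Lemma hk_profile_tail_le t s D : 0 < t -> 0 < s -> phiinv s <= D ->
  profile t D <= t / s * profile s D.
Proof.
move=> t0 s0 sD; have Dp : 0 < D := lt_le_trans (hphiinv2 _ s0).1 sD.
have VDp := hVpos _ Dp; have phiDp := hphipos _ Dp.
rewrite (hk_profile_off_diag _ _ s0 sD) /hk_profile (negbTE (lt0r_neq0 Dp)).
have -> : t / s * (s / (V D * phi D)) = t / (V D * phi D).
  by field; rewrite ?lt0r_neq0 // mulr_gt0.
by rewrite ge_min lexx orbT.
Qed.

Lemma phi_scale_gap K : 0 < K ->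
  exists2 A, 1 < A & forall r, 0 < r -> K * phi (r / A) <= phi r.
Proof.
move=> K0; case: hc => _ _ c3p _; case: hd => _ _ d3p _.
have K1 : 0 <= K / c3 + 1 by rewrite addr_ge0 ?divr_ge0 ?ltW.
set A := (K / c3 + 1) `^ d3^-1.
have Ad3 : A `^ d3 = K / c3 + 1.
  by rewrite -powRrM mulVf ?lt0r_neq0 // powRr1.
have A1 : 1 < A.
  have d3inv : 0 < d3^-1 by rewrite invr_gt0.
  have := @gt0_ltr_powR _ _ d3inv 1 (K / c3 + 1).
  rewrite powR1 !nnegrE ler01; apply => //.
  by rewrite ltrDr divr_gt0.
exists A => // r r0; clearbody A.
have A0 : 0 < A := lt_trans ltr01 A1.
have rho0 : 0 < r / A by rewrite divr_gt0.
have rhor : r / A < r by rewrite ltr_pdivrMr // ltr_pMr.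
have := (hphiscale _ _ rho0 rhor).1.
rewrite (_ : r / (r / A) = A); last by field; rewrite !lt0r_neq0.
rewrite Ad3 ler_pdivlMr ?hphipos // => h; apply: le_trans h.
have -> : c3 * (K / c3 + 1) = K + c3 by field; rewrite lt0r_neq0.
by rewrite ler_pM2r ?hphipos // lerDl ltW.
Qed.

Hypotheses (hXmeas : forall t, 0 <= t -> measurable_fun setT (X t))
  (hpnonneg : forall t x y, 0 < t -> 0 <= p t x y)
  (hpmeas : forall t x, 0 < t -> measurable_fun setT (p t x))
  (hptrans : forall t (x : M) (A : set M), 0 < t -> measurable A ->
     P x (X t @^-1` A) = (\int[mu]_(y in A) (p t x y)%:E)%E).
Variable C : R.
Hypotheses (C_ge1 : 1 <= C) (hk : forall t x y, 0 < t ->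
     C^-1 * hk_profile V phi phiinv t (d x y) <= p t x y /\
     p t x y <= C * hk_profile V phi phiinv t (d x y)).

Let C_gt0 : 0 < C. Proof. exact: lt_le_trans ltr01 C_ge1. Qed.

Let d_ge0 x y : 0 <= d x y. Proof. by case: hmetric. Qed.

Lemma heat_kernel_le_diag t x y : 0 < t -> p t x y <= C / V (phiinv t).
Proof.
move=> t0; apply: le_trans (hk _ x y t0).2 _.
by rewrite ler_pM2l // hk_profile_le_diag.
Qed.

Lemma heat_kernel_near_diag_ge t x y : 0 < t -> d x y <= phiinv t ->
  C^-1 / V (phiinv t) <= p t x y.
Proof.
by move=> t0 dt; rewrite -(hk_profile_near_diag _ _ t0 (d_ge0 x y) dt) (hk _ x y t0).1.
Qed.

Lemma heat_kernel_tail_le t s x y : 0 < t -> 0 < s -> phiinv s <= d x y ->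
  p t x y <= C ^+ 2 * (t / s) * p s x y.
Proof.
move=> t0 s0 sd; apply: le_trans (hk _ x y t0).2 _.
have ts0 : 0 <= t / s by rewrite divr_ge0 ?ltW.
have ps : hk_profile V phi phiinv s (d x y) <= C * p s x y.
  by rewrite -ler_pdivrMl // (hk _ x y s0).1.
rewrite expr2 -!mulrA ler_pM2l //; apply: le_trans (hk_profile_tail_le _ _ _ t0 s0 sd) _.
by rewrite [leRHS](_ : _ = t / s * (C * p s x y)); [exact: ler_wpM2l | ring].
Qed.

Let Xt_measurable t A : 0 < t -> measurable A -> measurable (X t @^-1` A).
Proof. by move=> t0 mA; rewrite -[_ @^-1` _]setTI; exact: hXmeas _ (ltW t0) _ _ mA. Qed.

Let pt_measurable t x A : 0 < t -> measurable_fun A (p t x).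
Proof. by move=> t0; apply: (measurable_funS measurableT (subsetT A)); exact: hpmeas. Qed.

Let cball_meas := cball_measurable hborel.

Lemma prob_cball_le t x r : 0 < t ->
  (P x (X t @^-1` cball d x r) <= (C / V (phiinv t))%:E * mu (cball d x r))%E.
Proof.
move=> t0; rewrite hptrans ?cball_meas //; apply: integral_le_cst_mul.
- exact: cball_meas.
- exact: pt_measurable.
- by move=> y _; exact: hpnonneg.
- by move=> y _; exact: heat_kernel_le_diag.
Qed.

Lemma prob_cball_ge t x r : 0 < t ->
  ((C^-1 / V (phiinv t))%:E * mu (cball d x (Num.min r (phiinv t)))
    <= P x (X t @^-1` cball d x r))%E.
Proof.
move=> t0; have [rho0 _] := hphiinv2 _ t0.
rewrite hptrans ?cball_meas //.
apply: (@le_trans _ _ (\int[mu]_(y in cball d x (Num.min r (phiinv t))) (p t x y)%:E)%E).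
  apply: cst_mul_le_integral.
  - exact: cball_meas.
  - exact: pt_measurable.
  - by apply: divr_ge0; [rewrite invr_ge0 ltW | exact/ltW/hVpos].
  - move=> y; rewrite /cball /= le_min => /andP[_ yt].
    exact: heat_kernel_near_diag_ge.
apply: ge0_subset_integral; rewrite ?cball_meas //.
- by apply/measurable_EFinP; exact: pt_measurable.
- by move=> y _; rewrite lee_fin hpnonneg.
- by move=> y; rewrite /cball /= le_min => /andP[].
Qed.

Lemma prob_cballC_le t s x r : 0 < t -> 0 < s -> phiinv s <= r ->
  (P x (X t @^-1` ~` cball d x r) <= (C ^+ 2 * (t / s))%:E)%E.
Proof.
move=> t0 s0 sr; have mBc := measurableC (cball_meas x r).
have k0 : 0 <= C ^+ 2 * (t / s) by rewrite mulr_ge0 ?exprn_ge0 ?divr_ge0 ?ltW.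
apply: (@le_trans _ _ ((C ^+ 2 * (t / s))%:E * P x (X s @^-1` ~` cball d x r))%E).
  rewrite !hptrans //; apply: integral_le_scale => //.
  - exact: pt_measurable.
  - by move=> y _; exact: hpnonneg.
  - exact: pt_measurable.
  - by move=> y _; exact: hpnonneg.
  - move=> y /= /negP; rewrite -ltNge => ry.
    by apply: heat_kernel_tail_le => //; exact: le_trans sr (ltW ry).
by rewrite -[leRHS]mule1 lee_wpmul2l ?lee_fin // probability_le1 //; exact: Xt_measurable.
Qed.

Lemma mu_cball_le x r : 0 < r -> (mu (cball d x r) <= (C * V r)%:E)%E.
Proof.
move=> r0; have t0 := hphipos _ r0; have Vr0 := hVpos _ r0.
have := prob_cball_ge _ x r t0; rewrite hphiinv1 // minxx => lb.
have {}lb := le_trans lb (probability_le1 _ (Xt_measurable _ _ t0 (cball_meas x r))).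
rewrite -[mu _]mul1e -(_ : ((C * V r) * (C^-1 / V r))%:E = 1%E); last first.
  by congr (_%:E); field; rewrite ?lt0r_neq0.
by rewrite EFinM -muleA -[leRHS]mule1 lee_wpmul2l // lee_fin mulr_ge0 ?ltW.
Qed.


Lemma prob_stays_in_cball A x r : 0 < A -> 0 < r ->
  2 * C ^+ 2 * phi (r / A) <= phi r ->
  ((2^-1)%:E <= P x (X (phi (r / A)) @^-1` cball d x r))%E.
Proof.
move=> A0 r0 gap; set t := phi (r / A); set s := phi r.
have t0 : 0 < t by apply: hphipos; rewrite divr_gt0.
have s0 : 0 < s := hphipos _ r0.
have mB := Xt_measurable _ _ t0 (cball_meas x r).
have exit : (P x (~` (X t @^-1` cball d x r)) <= (2^-1)%:E)%E.
  rewrite preimage_setC; apply: le_trans (prob_cballC_le _ _ x r t0 s0 _) _.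
    by rewrite hphiinv1.
  rewrite lee_fin (_ : C ^+ 2 * (t / s) = 2^-1 * (2 * C ^+ 2 * t / s)); last first.
    by field; rewrite lt0r_neq0.
  by rewrite -[leRHS]mulr1 ler_pM2l ?invr_gt0 // ler_pdivrMr // mul1r.
move: exit; rewrite probability_setC //.
rewrite -(fineK (fin_num_measure _ _ mB)) -EFinB !lee_fin; lra.
Qed.

Lemma mu_cball_ge_scaled A x r : 0 < A -> 0 < r ->
  2 * C ^+ 2 * phi (r / A) <= phi r ->
  ((V (r / A) / (2 * C))%:E <= mu (cball d x r))%E.
Proof.
move=> A0 r0 gap; have rho0 : 0 < r / A by rewrite divr_gt0.
have t0 := hphipos _ rho0; have Vrho0 := hVpos _ rho0.
have := le_trans (prob_stays_in_cball A x r A0 r0 gap) (prob_cball_le _ x r t0).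
rewrite hphiinv1 // => ub.
have -> : mu (cball d x r)
    = ((V (r / A) / C)%:E * ((C / V (r / A))%:E * mu (cball d x r)))%E.
  by rewrite muleA -EFinM (_ : _ * _ = 1) ?mul1e //; field; rewrite !lt0r_neq0.
rewrite (_ : V (r / A) / (2 * C) = V (r / A) / C * 2^-1); last first.
  by field; rewrite lt0r_neq0.
by rewrite EFinM lee_wpmul2l // lee_fin divr_ge0 ?ltW.
Qed.

Lemma mu_cball_ge : exists2 kappa, 0 < kappa &
  forall x r, 0 < r -> ((V r / kappa)%:E <= mu (cball d x r))%E.
Proof.
case: hc => _ c2p _ _; case: hd => _ d2p _ _.
have [A A1 gap] := phi_scale_gap _ (mulr_gt0 (ltr0Sn _ 1) (exprn_gt0 2 C_gt0)).
have A0 : 0 < A := lt_trans ltr01 A1.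
have Ad2 : 0 < A `^ d2 := powR_gt0 _ A0.
exists (2 * C * (c2 * A `^ d2)) => [|x r r0]; first by rewrite !mulr_gt0.
apply: le_trans (mu_cball_ge_scaled A x r A0 r0 (gap _ r0)); rewrite lee_fin.
have rho0 : 0 < r / A by rewrite divr_gt0.
have rhor : r / A < r by rewrite ltr_pdivrMr // ltr_pMr.
have := (hVscale _ _ rho0 rhor).2.
rewrite (_ : r / (r / A) = A); last by field; rewrite !lt0r_neq0.
rewrite ler_pdivrMr ?hVpos // => doubling.
rewrite ler_pdivrMr ?mulr_gt0 // [leRHS](_ : _ = c2 * A `^ d2 * V (r / A)) //.
by field; rewrite lt0r_neq0.
Qed.

Lemma prob_cball_lower_bound : exists2 c, 0 < c &
  forall r t x, 0 < r -> 0 < t ->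
  ((c * Num.min 1 (V r / V (phiinv t)))%:E <= P x (X t @^-1` cball d x r))%E.
Proof.
have [kappa kappa0 mu_ge] := mu_cball_ge.
exists (C * kappa)^-1 => [|r t x r0 t0]; first by rewrite invr_gt0 mulr_gt0.
have [rho0 _] := hphiinv2 _ t0; have Vrho0 := hVpos _ rho0.
have m0 : 0 < Num.min r (phiinv t) by rewrite lt_min r0.
apply: le_trans (prob_cball_ge _ x r t0).
apply: le_trans (lee_wpmul2l _ (mu_ge x _ m0)); last first.
  by rewrite lee_fin; apply: divr_ge0; rewrite ?invr_ge0 ltW.
rewrite lee_fin.
have -> : C^-1 / V (phiinv t) * (V (Num.min r (phiinv t)) / kappa)
    = (C * kappa)^-1 * (V (Num.min r (phiinv t)) / V (phiinv t)).
  by field; rewrite !lt0r_neq0.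
apply: ler_wpM2l; first by rewrite invr_ge0 ltW // mulr_gt0.
have [_|_] := leP r (phiinv t).
  by rewrite ge_min lexx orbT.
by rewrite divff ?lt0r_neq0 // ge_min lexx.
Qed.

Lemma prob_cball_upper_bound r t x : 0 < r -> 0 < t ->
  (P x (X t @^-1` cball d x r) <= (C ^+ 2 * Num.min 1 (V r / V (phiinv t)))%:E)%E.
Proof.
move=> r0 t0; have [rho0 _] := hphiinv2 _ t0; have Vrho0 := hVpos _ rho0.
rewrite minr_pMr ?exprn_ge0 ?(ltW C_gt0) // EFin_min le_min; apply/andP; split.
  apply: le_trans (probability_le1 _ (Xt_measurable _ _ t0 (cball_meas x r))) _.
  by rewrite lee_fin mulr1 exprn_ege1.
apply: le_trans (prob_cball_le _ x r t0) _.
apply: le_trans (lee_wpmul2l _ (mu_cball_le x r r0)) _.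
  by rewrite lee_fin divr_ge0 ?ltW.
rewrite -EFinM lee_fin [leRHS](_ : _ = C / V (phiinv t) * (C * V r)) //.
by field; rewrite lt0r_neq0.
Qed.

End HeatKernelEstimates.

Theorem lemma4p20
  (R : realType)
  (* the state space: a locally compact separable metric space with its Borel sets *)
  (dM : measure_display) (M : measurableType dM) (d : M -> M -> R)
  (hmetric : is_metric d)
  (hlc : locally_compact_metric d)
  (hsep : separable_metric d)
  (hborel : forall A : set M, measurable A <-> <<s open_balls d >> A)
  (* a positive Radon measure with full support *)
  (mu : {measure set M -> \bar R})
  (hradon : forall x : M, exists2 e : R, 0 < e & (mu (oball d x e) < +oo)%E)
  (hsupp : forall (x : M) (e : R), 0 < e -> (0 < mu (oball d x e))%E)
  (* scale functions V, phi and the inverse of phi *)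
  (V phi phiinv : R -> R)
  (c1 c2 c3 c4 d1 d2 d3 d4 : R)
  (hc : [/\ 0 < c1, 0 < c2, 0 < c3 & 0 < c4])
  (hd : [/\ 0 < d1, 0 < d2, 0 < d3 & 0 < d4])
  (hVpos : forall r, 0 < r -> 0 < V r)
  (hphipos : forall r, 0 < r -> 0 < phi r)
  (hVinc : forall r s, 0 < r -> r <= s -> V r <= V s)
  (hphiinc : forall r s, 0 < r -> r <= s -> phi r <= phi s)
  (hVscale : forall r s, 0 < r -> r < s ->
     c1 * (s / r) `^ d1 <= V s / V r /\ V s / V r <= c2 * (s / r) `^ d2)
  (hphiscale : forall r s, 0 < r -> r < s ->
     c3 * (s / r) `^ d3 <= phi s / phi r /\ phi s / phi r <= c4 * (s / r) `^ d4)
  (hphiinv1 : forall r, 0 < r -> phiinv (phi r) = r)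
  (hphiinv2 : forall t, 0 < t -> 0 < phiinv t /\ phi (phiinv t) = t)
  (* the process X = (X_t, P^x): paths in M on a sample space Omega *)
  (dO : measure_display) (Omega : measurableType dO)
  (P : M -> probability Omega R)
  (X : R -> Omega -> M)
  (hXmeas : forall t, 0 <= t -> measurable_fun setT (X t))
  (hX0 : forall x : M, P x [set w | X 0 w = x] = 1%E)
  (* its symmetric heat kernel p(t,x,y) (transition density w.r.t. mu) *)
  (p : R -> M -> M -> R)
  (hpnonneg : forall t x y, 0 < t -> 0 <= p t x y)
  (hpmeas : forall t x, 0 < t -> measurable_fun setT (p t x))
  (hpsym : forall t x y, 0 < t -> p t x y = p t y x)
  (hptrans : forall t (x : M) (A : set M), 0 < t -> measurable A ->
     P x (X t @^-1` A) = (\int[mu]_(y in A) (p t x y)%:E)%E)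
  (* two-sided heat kernel estimate *)
  (hHK : exists2 C : R, 1 <= C & forall t x y, 0 < t ->
     C^-1 * hk_profile V phi phiinv t (d x y) <= p t x y /\
     p t x y <= C * hk_profile V phi phiinv t (d x y)) :
  exists2 C : R, 1 <= C & forall (r t : R) (x : M), 0 < r -> 0 < t ->
     ((C^-1 * Num.min 1 (V r / V (phiinv t)))%:E
        <= P x [set w | (d (X t w) x <= r)%R])%E /\
     (P x [set w | (d (X t w) x <= r)%R]
        <= (C * Num.min 1 (V r / V (phiinv t)))%:E)%E.
Proof.
case: hHK => C C_ge1 hk.
have [c c_gt0 lower] := prob_cball_lower_bound hmetric hborel hc hd hVpos hphipos
  hVinc hphiinc hphiinv2 hVscale hphiscale hphiinv1 hXmeas hpnonneg hpmeas hptrans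
  C C_ge1 hk.
have upper := prob_cball_upper_bound hmetric hborel hVpos hphipos hVinc hphiinc
  hphiinv2 hphiinv1 hXmeas hpnonneg hpmeas hptrans C C_ge1 hk.
exists (Num.max (C ^+ 2) c^-1) => [|r t x r0 t0]; first by rewrite le_max exprn_ege1.
have -> : [set w | d (X t w) x <= r] = X t @^-1` cball d x r.
  by case: hmetric => _ _ dsym _; apply/seteqP; split => w; rewrite /cball /= dsym.
have [rho0 _] := hphiinv2 t t0.
have min_ge0 : 0 <= Num.min 1 (V r / V (phiinv t)).
  by rewrite le_min ler01 divr_ge0 ?ltW ?hVpos.
split.
- apply: le_trans (lower r t x r0 t0); rewrite lee_fin ler_wpM2r //.
  rewrite -[leRHS]invrK lef_pV2 ?posrE ?invr_gt0 //.
    by rewrite le_max lexx orbT.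
  by rewrite lt_max invr_gt0 c_gt0 orbT.
- apply: le_trans (upper r t x r0 t0) _.
  by rewrite lee_fin ler_wpM2r // le_max lexx.
Qed.
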